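(* Let $X_n$ be the compactification degree of a simple two-dimensional lattice path chosen uniformly at random among the $4^n$ paths of length $n\ge1$. Then for $r\ge0$, \[ \mathbb{P}(X_n=r)=4^{r+1-n}\sum_{\lambda\ge0}\lambda(-1)^{\lambda-1}\bigg[\binom{2n-1}{n-\lambda2^r}-\binom{2n-1}{n-\lambda2^r-1}\bigg], \] and \[ \mathbb{E}X_n=4^{-n}\sum_{k\ge1}8k\big(2^{v_2(k)}-1\big)\bigg[\binom{2n-1}{n-k}-\binom{2n-1}{n-k-1}\bigg], \] where $v_2(k)$ is the largest $\nu$ such that $2^\nu$ divides $k$, and binomial coefficients with negative lower index are $0$.
   Context: A simple two-dimensional lattice path is a finite nonempty word over the steps $\{\uparrow,\rightarrow,\downarrow,\leftarrow\}$; its length is the number of steps. The reduction $\Phi_L(\ell)$ of a path $\ell$ of length $\ge2$: first, if the first step of $\ell$ is vertical, the entire path is rotated by $90^\circ$ clockwise; then, if the last step is horizontal, this last step alone is rotated by $90^\circ$ clockwise. The resulting path decomposes uniquely as $H_1V_1\cdots H_kV_k$ ($k\ge1$) with each $H_i$ a nonempty maximal run of horizontal steps and each $V_i$ a nonempty maximal run of vertical steps. Each block $H_iV_i$ is replaced by $\nearrow$, $\searrow$, $\swarrow$, $\nwarrow$ according as ($H_i$ starts with $\rightarrow$, $V_i$ with $\uparrow$), ($\rightarrow$, $\downarrow$), ($\leftarrow$, $\downarrow$), ($\leftarrow$, $\uparrow$); the diagonal path is then rotated by $45^\circ$ clockwise, giving $\Phi_L(\ell)$ of length $k$. The compactification degree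 $\mathrm{cdeg}(\ell)$ of a path of length $\ge1$ is the number $m\ge0$ such that $\Phi_L^m(\ell)$ consists of a single step. *)

From HB Require Import structures.
From mathcomp Require Import all_boot all_order all_algebra.
Set Implicit Arguments. Unset Strict Implicit. Unset Printing Implicit Defensive.
Import Order.TTheory GRing.Theory Num.Theory.

Inductive step := SU | SR | SD | SL.

Definition step_to_ord (s : step) : 'I_4 :=
  match s with SU => inord 0 | SR => inord 1 | SD => inord 2 | SL => inord 3 end.
Definition ord_to_step (i : 'I_4) : step :=
  match val i with 0 => SU | 1 => SR | 2 => SD | _ => SL end.
Lemma step_ordK : cancel step_to_ord ord_to_step.
Proof. by case; rewrite /ord_to_step /= inordK. Qed.
HB.instance Definition _ := Finite.copy step (can_type step_ordK).

Definition horiz (s : step) : bool := match s with SR | SL => true | _ => false end.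

Definition rot90 (s : step) : step :=
  match s with SU => SR | SR => SD | SD => SL | SL => SU end.

(* first steps of the maximal runs of steps of constant orientation *)
Fixpoint heads (prev : step) (s : seq step) : seq step :=
  match s with
  | [::] => [::]
  | x :: t => if horiz x == horiz prev then heads x t else x :: heads x t
  end.
Definition run_heads (s : seq step) : seq step :=
  match s with [::] => [::] | x :: t => x :: heads x t end.

(* block H_i V_i (by first steps h, v) -> diagonal, then rotated 45 deg clockwise:
   NE -> R, SE -> D, SW -> L, NW -> U *)
Definition block_code (h v : step) : step :=
  match h, v with
  | SR, SU => SR
  | SR, _ => SD
  | _, SD => SL
  | _, _ => SU
  end.

Fixpoint pair_blocks (l : seq step) : seq step :=
  match l with
  | h :: v :: t => block_code h v :: pair_blocks t
  | _ => [::]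
  end.

(* The reduction Phi_L (meaningful for paths of length >= 2) *)
Definition PhiL (s : seq step) : seq step :=
  let s1 := match s with
            | x :: _ => if horiz x then s else map rot90 s
            | [::] => [::] end in
  let s2 := match s1 with
            | x :: t => if horiz (last x t) then rcons (belast x t) (rot90 (last x t))
                        else s1
            | [::] => [::] end in
  pair_blocks (run_heads s2).

Fixpoint cdeg_fuel (fuel : nat) (s : seq step) : nat :=
  if size s <= 1 then 0 else
  match fuel with 0 => 0 | f.+1 => (cdeg_fuel f (PhiL s)).+1 end.

(* PhiL at least halves the length, so fuel = size s suffices. *)
Definition cdeg (s : seq step) : nat := cdeg_fuel (size s) s.

Definition binZ (m : nat) (k : int) : rat :=
  match k with Posz k' => ('C(m, k'))%:R | Negz _ => 0 end.

(* Every path of length k has exactly 4 * 2^(n - 2k) * C(n - 1, 2k - 1) preimages of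
   length n under Phi_L: a preimage is fixed by its first step and by the lengths of its
   2k runs, each step that continues a run having two possible directions.  Hence the
   numbers N(n, r) of paths of length n and degree r satisfy the linear recurrence
   N(n, r + 1) = 4 sum_k w(n, 2k) N(k, r).  The ballot differences
   B(n, i) = C(2n - 1, n - i) - C(2n - 1, n - i - 1) count nonnegative walks, and
   comparing recurrences gives sum_k w(n, 2k) B(k, J) = B(n, 2J), while
   sum_l l (-1)^(l-1) B(n, l) = [n = 1]; so N(n, r) = 4^(r+1) sum_l l (-1)^(l-1) B(n, l 2^r).
   Summing r N(n, r) and telescoping over r produces the 2-adic weights 2^v2(k) - 1. *)

From mathcomp Require Import all_boot all_order all_algebra.
From mathcomp Require Import ring zify.
Set Implicit Arguments. Unset Strict Implicit. Unset Printing Implicit Defensive.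
Import Order.TTheory GRing.Theory Num.Theory.
Local Open Scope ring_scope.

Lemma sum_ord_shrink (R : nmodType) (f : nat -> R) a b : (a <= b)%N ->
  (forall m, (a <= m)%N -> f m = 0) -> \sum_(m < b) f m = \sum_(m < a) f m.
Proof.
move=> le_ab f0; rewrite -!(big_mkord xpredT) (big_cat_nat (n := a)) //=.
rewrite [X in _ + X]big1_seq ?addr0 // => m /andP[_].
by rewrite mem_index_iota => /andP[/f0].
Qed.

Lemma sum_ord_double (R : nmodType) (f : nat -> R) N :
  \sum_(m < N.*2) f m = \sum_(k < N) (f k.*2 + f k.*2.+1).
Proof.
elim: N => [|N IH]; first by rewrite !big_ord0.
by rewrite doubleS !big_ord_recr /= IH addrA.
Qed.

(** * Sums over all paths of a given length *)

Definition stepsum (G : step -> rat) : rat := G SU + G SR + G SD + G SL.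

Fixpoint pathsum (m : nat) (G : seq step -> rat) : rat :=
  if m is m'.+1 then stepsum (fun x => pathsum m' (fun t => G (x :: t))) else G [::].

Lemma pathsumS m G : pathsum m.+1 G = stepsum (fun x => pathsum m (fun t => G (x :: t))).
Proof. by []. Qed.

Arguments pathsum : simpl never.

Lemma eq_stepsum (G H : step -> rat) : G =1 H -> stepsum G = stepsum H.
Proof. by move=> GH; rewrite /stepsum !GH. Qed.

Lemma big_step (G : step -> rat) : \sum_(x : step) G x = stepsum G.
Proof.
rewrite (reindex ord_to_step); last first.
  exists step_to_ord => [i _|x _]; last exact: step_ordK.
  by apply: val_inj; case: i => -[|[|[|[|i]]]] //= Hi; rewrite inordK.
by rewrite !big_ord_recl big_ord0 /stepsum /ord_to_step /= addr0 !addrA.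
Qed.

Lemma big_tuple_pathsum (n : nat) (F : seq step -> rat) :
  \sum_(p : n.-tuple step) F p = pathsum n F.
Proof.
elim: n F => [|n IH] F.
  by rewrite (big_pred1 [tuple]) // => p; rewrite [p]tuple0; exact/esym/eqP.
have cons_bij : bijective (fun xp : step * n.-tuple step => [tuple of xp.1 :: xp.2]).
  exists (fun p : n.+1.-tuple step => (thead p, [tuple of behead p])).
    by case=> x p; congr (_, _); apply: val_inj.
  by case=> -[|x s] ? //; apply: val_inj.
rewrite (reindex _ (onW_bij _ cons_bij)) /=.
rewrite -(pair_bigA _ (fun x (p : n.-tuple step) => F (x :: p))) /= big_step.
by rewrite pathsumS; apply: eq_stepsum => x; rewrite -IH.
Qed.

Lemma eq_pathsum m G H :
  (forall s, size s = m -> G s = H s) -> pathsum m G = pathsum m H.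
Proof.
elim: m G H => [|m IH] G H GH; first exact: GH.
by rewrite !pathsumS; apply: eq_stepsum => x; apply: IH => s sz; apply: GH; rewrite /= sz.
Qed.

Lemma pathsumD m G H : pathsum m (fun s => G s + H s) = pathsum m G + pathsum m H.
Proof. by elim: m G H => [|m IH] G H //; rewrite !pathsumS /stepsum !IH; ring. Qed.

Lemma pathsumMl m c G : pathsum m (fun s => c * G s) = c * pathsum m G.
Proof. by elim: m G => [|m IH] G //; rewrite !pathsumS /stepsum !IH; ring. Qed.

Lemma pathsum0 m : pathsum m (fun _ => 0) = 0.
Proof. by elim: m => [|m IH] //; rewrite pathsumS /stepsum IH; ring. Qed.

Lemma pathsum_sum m N (F : nat -> seq step -> rat) :
  pathsum m (fun s => \sum_(r < N) F r s) = \sum_(r < N) pathsum m (F r).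
Proof.
elim: N => [|N IH].
  by rewrite big_ord0 (@eq_pathsum _ _ (fun _ => 0)) ?pathsum0 // => s _; rewrite big_ord0.
rewrite big_ord_recr /= -IH -pathsumD; apply: eq_pathsum => s _.
by rewrite big_ord_recr.
Qed.

Lemma pathsum_rot90 m G : pathsum m (fun s => G (map rot90 s)) = pathsum m G.
Proof.
elim: m G => [|m IH] G //; rewrite !pathsumS /stepsum /=.
by rewrite !(IH (fun t => G (_ :: t))); ring.
Qed.

Lemma pathsumSr m G :
  pathsum m.+1 G = pathsum m (fun t => stepsum (fun y => G (rcons t y))).
Proof.
elim: m G => [|m IH] G //; rewrite pathsumS [in RHS]pathsumS.
by apply: eq_stepsum => x; rewrite IH.
Qed.

Lemma pathsumS_eq m G (H : step -> seq step -> rat) :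
  (forall x t, G (x :: t) = H x t) -> pathsum m.+1 G = stepsum (fun x => pathsum m (H x)).
Proof. by move=> GH; rewrite pathsumS; apply: eq_stepsum => x; apply: eq_pathsum. Qed.

(** * Preimages under the reduction *)

Lemma heads_SD u : heads SD u = heads SU u. Proof. by case: u. Qed.
Lemma heads_SL u : heads SL u = heads SR u. Proof. by case: u. Qed.

Definition vert (s : step) : rat := (~~ horiz s)%:R.

Lemma vert_last_SD u : vert (last SD u) = vert (last SU u). Proof. by case: u. Qed.
Lemma vert_last_SL u : vert (last SL u) = vert (last SR u). Proof. by case: u. Qed.

Definition reduce_h (x : step) (u : seq step) := pair_blocks (x :: heads x u).
Definition reduce_v (v : step) (u : seq step) := pair_blocks (heads v u).

(* [hsum_from x m F] sums [F] over the reductions of the paths [x :: u], with [u] of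
   length [m], that start with the horizontal step [x] and end vertically, so that [PhiL]
   rotates nothing; [vsum] does the same for the tails that follow a vertical run. *)
Definition hsum_from x m (F : seq step -> rat) :=
  pathsum m (fun u => vert (last x u) * F (reduce_h x u)).
Definition hsum m F := hsum_from SR m F + hsum_from SL m F.
Definition vsum m (F : seq step -> rat) :=
  pathsum m (fun u => vert (last SU u) * F (reduce_v SU u)).

Lemma hsum_fromS x m F : horiz x ->
  hsum_from x m.+1 F = 2 * hsum_from x m F
    + vsum m (fun w => F (block_code x SU :: w)) + vsum m (fun w => F (block_code x SD :: w)).
Proof.
move=> hx; rewrite /hsum_from (@pathsumS_eq _ _ (fun y t => if horiz y
    then vert (last x t) * F (reduce_h x t)
    else vert (last SU t) * F (block_code x y :: reduce_v SU t))).
  by rewrite /stepsum /vsum /=; ring.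
by case: x hx => // _ [] t;
  rewrite /reduce_h /reduce_v /= ?heads_SD ?heads_SL ?vert_last_SD ?vert_last_SL.
Qed.

Lemma hsumS m F :
  hsum m.+1 F = 2 * hsum m F + stepsum (fun c => vsum m (fun w => F (c :: w))).
Proof. by rewrite /hsum !hsum_fromS // /stepsum /=; ring. Qed.

Lemma vsumS m F : vsum m.+1 F = 2 * vsum m F + hsum m F.
Proof.
rewrite /vsum (@pathsumS_eq _ _ (fun y t => if horiz y
    then vert (last y t) * F (reduce_h y t)
    else vert (last SU t) * F (reduce_v SU t))).
  by rewrite /stepsum /hsum /hsum_from /=; ring.
by case=> t; rewrite /reduce_v /= ?heads_SD ?vert_last_SD.
Qed.

Lemma hsum0 F : hsum 0 F = 0.
Proof. by rewrite /hsum /hsum_from /pathsum /vert /= !mul0r addr0. Qed.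

Lemma vsum0 F : vsum 0 F = F [::].
Proof. by rewrite /vsum /pathsum /vert /= mul1r. Qed.

(* [run_weight n m = 2 ^ (n - m) * 'C(n.-1, m.-1)]: the compositions of [n] into [m] runs,
   each step that continues a run having two possible directions. *)
Fixpoint run_weight (n m : nat) : rat :=
  match n, m with
  | 0, 0 => 1
  | n'.+1, m'.+1 => 2 * run_weight n' m'.+1 + run_weight n' m'
  | _, _ => 0
  end.

Lemma run_weightSS n m : run_weight n.+1 m.+1 = 2 * run_weight n m.+1 + run_weight n m.
Proof. by []. Qed.

Lemma run_weightS0 n : run_weight n.+1 0 = 0.
Proof. by []. Qed.

Lemma run_weight_gt n m : (n < m)%N -> run_weight n m = 0.
Proof.
elim: n m => [|n IH] [|m] //= lt_nm.
by rewrite !IH ?mulr0 ?addr0 // ltnW.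
Qed.

Arguments run_weight : simpl never.

Lemma hsum_vsum_runs m F :
  hsum m F = \sum_(k < m.+1) run_weight m.+1 k.*2 * pathsum k F /\
  vsum m F = \sum_(k < m.+1) run_weight m.+1 k.*2.+1 * pathsum k F.
Proof.
elim: m F => [|m IH] F.
  by rewrite hsum0 vsum0 !big_ord1 /= run_weightSS /run_weight /pathsum /=; split; ring.
split.
- rewrite hsumS (proj1 (IH F)).
  have -> : stepsum (fun c => vsum m (fun w => F (c :: w))) =
            \sum_(k < m.+1) run_weight m.+1 k.*2.+1 * pathsum k.+1 F.
    rewrite /stepsum !(fun c => proj2 (IH (fun w => F (c :: w)))) -!big_split /=.
    by apply: eq_bigr => k _; rewrite pathsumS /stepsum !mulrDr.
  have -> : \sum_(k < m.+1) run_weight m.+1 k.*2 * pathsum k F =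
            \sum_(k < m.+1) run_weight m.+1 k.+1.*2 * pathsum k.+1 F.
    rewrite big_ord_recl [RHS]big_ord_recr /= (@run_weight_gt m.+1 m.+1.*2) -?addnn;
      last by lia.
    by rewrite run_weightS0 !mul0r add0r addr0.
  rewrite [RHS]big_ord_recl /= run_weightS0 mul0r add0r.
  rewrite mulr_sumr -big_split /=; apply: eq_bigr => k _.
  by rewrite /bump /= add1n [run_weight m.+2 _]run_weightSS; ring.
- rewrite vsumS (proj1 (IH F)) (proj2 (IH F)) [RHS]big_ord_recr /=.
  rewrite (@run_weight_gt m.+2 m.+1.*2.+1) ?mul0r ?addr0; last by rewrite -addnn; lia.
  rewrite mulr_sumr -big_split /=; apply: eq_bigr => k _.
  by rewrite [run_weight m.+2 _]run_weightSS; ring.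
Qed.

Definition PhiL_horiz (s : seq step) : seq step :=
  pair_blocks (run_heads (match s with
    | x :: t => if horiz (last x t) then rcons (belast x t) (rot90 (last x t)) else s
    | [::] => [::] end)).

Lemma PhiL_cons x t :
  PhiL (x :: t) = PhiL_horiz (if horiz x then x :: t else rot90 x :: map rot90 t).
Proof. by rewrite /PhiL /PhiL_horiz; case: (horiz x). Qed.

Lemma PhiL_horiz_rcons x t y :
  PhiL_horiz (x :: rcons t y) = reduce_h x (rcons t (if horiz y then rot90 y else y)).
Proof.
rewrite /PhiL_horiz -/(last x (rcons t y)) last_rcons.
by case: (horiz y) => //; rewrite -/(belast x (rcons t y)) belast_rcons.
Qed.

Lemma pathsum_PhiL_horiz x m F :
  pathsum m.+1 (fun t => F (PhiL_horiz (x :: t))) = 2 * hsum_from x m.+1 F.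
Proof.
rewrite /hsum_from !pathsumSr -pathsumMl; apply: eq_pathsum => t _.
(* a final horizontal step is rotated onto a vertical one *)
by rewrite /stepsum !PhiL_horiz_rcons !last_rcons /vert /=; ring.
Qed.

Lemma pathsum_PhiL m F :
  pathsum m.+2 (fun s => F (PhiL s)) =
  4 * \sum_(k < m.+2) run_weight m.+2 k.*2 * pathsum k F.
Proof.
rewrite -(proj1 (hsum_vsum_runs _ _)) pathsumS /stepsum.
rewrite !(@eq_pathsum _ (fun t => F (PhiL (_ :: t))) _ (fun t _ => congr1 F (PhiL_cons _ t))) /=.
rewrite !(pathsum_rot90 _ (fun t => F (PhiL_horiz (_ :: t)))).
by rewrite !pathsum_PhiL_horiz /hsum; ring.
Qed.

Lemma size_pair_blocks l : ((size (pair_blocks l)).*2 <= size l)%N.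
Proof.
suff : ((size (pair_blocks l)).*2 <= size l)%N /\
       forall x, ((size (pair_blocks (x :: l))).*2 <= (size l).+1)%N by case.
elim: l => [|y l [IH1 IH2]]; first by split => // x.
by split=> // x /=; rewrite doubleS !ltnS (leq_trans IH1).
Qed.

Lemma size_heads p s : (size (heads p s) <= size s)%N.
Proof.
elim: s p => [|x t IH] p //=.
by case: (_ == _) => /=; rewrite ?ltnS ?IH // (leq_trans (IH x)).
Qed.

Lemma size_run_heads l : (size (run_heads l) <= size l)%N.
Proof. by case: l => [|y u] //=; rewrite ltnS size_heads. Qed.

Lemma size_PhiL s : ((size (PhiL s)).*2 <= size s)%N.
Proof.
case: s => [|x t] //; rewrite PhiL_cons /PhiL_horiz.
apply: leq_trans (size_pair_blocks _) _; apply: leq_trans (size_run_heads _) _.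
by case: (horiz x); case: (horiz _); rewrite /= ?size_rcons ?size_belast ?size_map.
Qed.

Lemma cdeg_fuel_enough f f' s : (size s <= f.+1)%N -> (size s <= f'.+1)%N ->
  cdeg_fuel f s = cdeg_fuel f' s.
Proof.
elim: f f' s => [|f IH] [|f'] s sf sf' /=; case: leqP => // s_gt1; try lia.
congr S; apply: IH; have := size_PhiL s; lia.
Qed.

Lemma cdeg_small s : (size s <= 1)%N -> cdeg s = 0%N.
Proof. by move=> small; rewrite /cdeg; case: (size s) => [|f]; rewrite /= small. Qed.

Lemma cdeg_PhiL s : (1 < size s)%N -> cdeg s = (cdeg (PhiL s)).+1.
Proof.
move=> s_gt1; rewrite /cdeg; case sz: (size s) s_gt1 => [|n] // s_gt1 /=.
rewrite sz leqNgt s_gt1; congr S.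
apply: cdeg_fuel_enough => //; have := size_PhiL s; lia.
Qed.

Lemma cdeg_le s : (cdeg s <= size s)%N.
Proof.
rewrite /cdeg; elim: (size s) {2}s => [|f IH] t /=; first by case: ifP.
by case: ifP => // _; rewrite ltnS.
Qed.

(** * Degrees of the paths of a given length *)

Definition count_cdeg n r := pathsum n (fun s => (cdeg s == r)%:R).

Lemma count_cdegSS m r :
  count_cdeg m.+2 r.+1 = 4 * \sum_(k < m.+2) run_weight m.+2 k.*2 * count_cdeg k r.
Proof.
rewrite /count_cdeg -pathsum_PhiL; apply: eq_pathsum => s sz.
by rewrite cdeg_PhiL ?sz // eqSS.
Qed.

Lemma count_cdeg1 r : count_cdeg 1 r = 4 * (0%N == r)%:R.
Proof. by rewrite /count_cdeg pathsumS /stepsum /pathsum !cdeg_small //; ring. Qed.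

Lemma count_cdeg0 m : count_cdeg m.+2 0%N = 0.
Proof.
rewrite /count_cdeg -(pathsum0 m.+2); apply: eq_pathsum => s sz.
by rewrite cdeg_PhiL ?sz.
Qed.

Lemma card_cdeg_eq n r :
  #|[set p : n.-tuple step | cdeg p == r]|%:R = count_cdeg n r.
Proof.
rewrite /count_cdeg -big_tuple_pathsum -sum1_card natr_sum big_mkcond /=; apply: eq_bigr => p _.
by rewrite inE; case: (_ == _).
Qed.

Lemma pathsum_cdeg n :
  pathsum n (fun s => (cdeg s)%:R) = \sum_(r < n.+1) r%:R * count_cdeg n r.
Proof.
rewrite /count_cdeg; under eq_bigr => r _ do rewrite -pathsumMl.
rewrite -(@pathsum_sum _ _ (fun r s => r%:R * (cdeg s == r)%:R)); apply: eq_pathsum => s sz.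
have lt_cdeg : (cdeg s < n.+1)%N by rewrite ltnS -sz cdeg_le.
rewrite (bigD1 (Ordinal lt_cdeg)) //= eqxx mulr1 big1 ?addr0 // => i ne_i.
suff -> : (cdeg s == i) = false by rewrite mulr0.
by apply/negbTE; apply: contra ne_i => /eqP eq_i; apply/eqP/val_inj.
Qed.

(** * Ballot numbers *)

Lemma binZ_neg m (z : int) : z < 0 -> binZ m z = 0.
Proof. by case: z. Qed.

Lemma binZS m (z : int) : binZ m.+1 z = binZ m z + binZ m (z - 1).
Proof. by case: z => [[|k]|k] /=; rewrite ?bin0 ?addr0 // binS natrD subn1. Qed.

Definition ballot (n i : nat) : rat :=
  binZ (2 * n).-1 (n%:Z - i%:Z) - binZ (2 * n).-1 (n%:Z - i%:Z - 1).

Lemma ballotSS n i : (0 < n)%N ->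
  ballot n.+1 i.+1 = ballot n i + 2 * ballot n i.+1 + ballot n i.+2.
Proof.
move=> n_gt0; rewrite /ballot.
have -> : (2 * n.+1).-1 = ((2 * n).-1).+2 by lia.
have -> : n.+1%:Z - i.+1%:Z = n%:Z - i%:Z by lia.
have -> : n%:Z - i.+1%:Z = n%:Z - i%:Z - 1 by lia.
have -> : n%:Z - i.+2%:Z = n%:Z - i%:Z - 1 - 1 by lia.
by rewrite !binZS; ring.
Qed.

Lemma ballot1 i : ballot 1 i = (i == 1%N)%:R.
Proof. by case: i => [|[|i]]. Qed.

Lemma ballot_0 n : (0 < n)%N -> ballot n 0 = 0.
Proof.
case: n => [|n] // _; rewrite /ballot subr0.
have -> : n.+1%:Z - 1 = n%:Z by lia.
rewrite /binZ -bin_sub; last by lia.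
by rewrite (_ : ((2 * n.+1).-1 - n.+1)%N = n) ?subrr //; lia.
Qed.

Lemma ballot_gt n i : (n < i)%N -> ballot n i = 0.
Proof. by move=> lt_ni; rewrite /ballot !binZ_neg ?subr0 //; lia. Qed.

Definition ballot_recurrence (X : nat -> nat -> rat) :=
  [/\ forall i, X 1%N i = (i == 1%N)%:R,
      forall n, (0 < n)%N -> X n 0%N = 0 &
      forall n i, (0 < n)%N -> X n.+1 i.+1 = X n i + 2 * X n i.+1 + X n i.+2].

Lemma eq_ballot_recurrence X Y : ballot_recurrence X -> ballot_recurrence Y ->
  forall n i, (0 < n)%N -> X n i = Y n i.
Proof.
move=> [X1 X0 XS] [Y1 Y0 YS]; elim=> [|n IH] // i _.
case: n IH => [|n] IH; first by rewrite X1 Y1.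
by case: i => [|i]; rewrite ?X0 ?Y0 // XS // YS // !IH.
Qed.

Lemma ballot_recurrence_ballot : ballot_recurrence ballot.
Proof. by split; [exact: ballot1 | exact: ballot_0 | exact: ballotSS]. Qed.

(* [walks N h] counts the nonnegative +-1 walks of length N from height h to 0. *)
Fixpoint walks (N h : nat) : rat :=
  match N, h with
  | 0, _ => (h == 0%N)%:R
  | N'.+1, 0 => walks N' 1
  | N'.+1, h'.+1 => walks N' h' + walks N' h'.+2
  end.

Lemma walks0 h : walks 0 h = (h == 0%N)%:R. Proof. by []. Qed.
Lemma walksS0 N : walks N.+1 0 = walks N 1. Proof. by []. Qed.
Lemma walksSS N h : walks N.+1 h.+1 = walks N h + walks N h.+2. Proof. by []. Qed.
Arguments walks : simpl never.

Lemma walks_odd N h : odd (N + h) -> walks N h = 0.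
Proof.
elim: N h => [|N IH] [|h] odd_Nh //.
- by rewrite walksS0 IH // addn1 -[N.+1]addn0.
- rewrite addSn addnS /= negbK in odd_Nh.
  by rewrite walksSS !IH ?addr0 // !addnS /= negbK.
Qed.

Lemma ballot_walks n i : (0 < n)%N -> ballot n i.+1 = walks (2 * n).-1 i.*2.+1.
Proof.
move=> n_gt0; pose X n i := if i is i'.+1 then walks (2 * n).-1 i'.*2.+1 else 0.
suff XR : ballot_recurrence X.
  exact: (@eq_ballot_recurrence _ _ ballot_recurrence_ballot XR n i.+1 n_gt0).
split=> [[|[|j]] //|//|m [|j] m_gt0]; rewrite /X.
- have -> : (2 * m.+1).-1 = ((2 * m).-1).+2 by lia.
  by rewrite walksSS walksS0 walksSS; ring.
- have -> : (2 * m.+1).-1 = ((2 * m).-1).+2 by lia.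
  by rewrite !walksSS; ring.
Qed.

Lemma ballot_runs n i : (0 < n)%N ->
  ballot n i.+1 = \sum_(m < n) run_weight n m.+1 * walks m i.
Proof.
move=> n_gt0.
pose X n i := if i is i'.+1 then \sum_(m < n) run_weight n m.+1 * walks m i' else 0.
suff XR : ballot_recurrence X.
  exact: (@eq_ballot_recurrence _ _ ballot_recurrence_ballot XR n i.+1 n_gt0).
split=> [j|//|m j m_gt0]; rewrite /X.
  by case: j => [|[|j]] //; rewrite big_ord1 /run_weight walks0 /=; ring.
have -> : \sum_(k < m.+1) run_weight m.+1 k.+1 * walks k j =
   2 * (\sum_(k < m.+1) run_weight m k.+1 * walks k j) + \sum_(k < m.+1) run_weight m k * walks k j.
  by rewrite mulr_sumr -big_split; apply: eq_bigr => k _; rewrite /= run_weightSS; ring.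
rewrite big_ord_recr /= (@run_weight_gt m m.+1) // mul0r addr0.
rewrite [\sum_(k < m.+1) run_weight m k * _]big_ord_recl /=.
case: m m_gt0 => [|m] // _; rewrite run_weightS0 mul0r add0r.
case: j => [|j].
  by rewrite add0r addrC; congr (_ + _); apply: eq_bigr => k _; rewrite walksS0.
rewrite -addrA addrC -addrA; congr (_ + _).
by rewrite -big_split; apply: eq_bigr => k _; rewrite /= walksSS; ring.
Qed.

Lemma run_weight_ballot n J : (0 < n)%N -> (0 < J)%N ->
  \sum_(k < n) run_weight n k.*2 * ballot k J = ballot n J.*2.
Proof.
case: J => [|J] // n_gt0 _; rewrite doubleS ballot_runs //.
case: n n_gt0 => [|n] // _; rewrite big_ord_recl /= run_weightS0 mul0r add0r.
have -> : \sum_(i < n) run_weight n.+1 (bump 0 i).*2 * ballot (bump 0 i) J.+1 =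
          \sum_(k < n.+1) run_weight n.+1 k.*2.+2 * walks k.*2.+1 J.*2.+1.
  rewrite big_ord_recr /= (@run_weight_gt n.+1 n.*2.+2) ?mul0r ?addr0; last by lia.
  apply: eq_bigr => k _; rewrite /bump leq0n add1n ballot_walks //.
  by have -> : (2 * k.+1).-1 = k.*2.+1 by lia.
rewrite -(@sum_ord_shrink _ (fun m => run_weight n.+1 m.+1 * walks m J.*2.+1) n.+1 n.+1.*2).
- rewrite (@sum_ord_double _ (fun m => run_weight n.+1 m.+1 * walks m J.*2.+1)).
  (* walks of even length from the odd height [J.*2.+1] do not exist *)
  apply: eq_bigr => k _.
  by rewrite (@walks_odd k.*2) ?mulr0 ?add0r // addnS /= oddD !odd_double.
- by rewrite -addnn leq_addr.
- by move=> m lt_nm; rewrite run_weight_gt ?mul0r.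
Qed.

(** * Distribution and expectation of the degree *)

Definition altw (l : nat) : rat := l%:R * (-1) ^+ l.-1.

Lemma altw0 : altw 0 = 0.
Proof. by rewrite /altw mul0r. Qed.

Lemma altw_rec l : (0 < l)%N -> altw l.+1 + 2 * altw l + altw l.-1 = 0.
Proof.
by case: l => [|[|l]] // _; rewrite /altw /= ?exprS -?natr1 /=; ring.
Qed.

Lemma altw_ballotS n : (0 < n)%N -> \sum_(l < n.+2) altw l * ballot n.+1 l = 0.
Proof.
move=> n_gt0; rewrite big_ord_recl altw0 mul0r add0r.
have -> : \sum_(i < n.+1) altw (bump 0 i) * ballot n.+1 (bump 0 i) =
  \sum_(l < n.+1) altw l.+1 * ballot n l + \sum_(l < n.+1) 2 * altw l.+1 * ballot n l.+1
  + \sum_(l < n.+1) altw l.+1 * ballot n l.+2.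
  rewrite -!big_split; apply: eq_bigr => l _.
  by rewrite /bump leq0n add1n ballotSS //=; ring.
have -> : \sum_(l < n.+1) 2 * altw l.+1 * ballot n l.+1 =
          \sum_(l < n.+1) 2 * altw l * ballot n l.
  rewrite [LHS]big_ord_recr [RHS]big_ord_recl /= ballot_gt // altw0 mulr0 !mul0r addr0 add0r.
  by apply: eq_bigr.
have -> : \sum_(l < n.+1) altw l.+1 * ballot n l.+2 =
          \sum_(l < n.+1) altw l.-1 * ballot n l.
  rewrite -(@sum_ord_shrink _ (fun l => altw l.-1 * ballot n l) n.+1 n.+3).
  - by rewrite !big_ord_recl ballot_0 // altw0 !mul0r !add0r.
  - by rewrite ltnS !leqW.
  - by move=> m lt_nm; rewrite ballot_gt ?mulr0.
rewrite -!big_split big1 // => l _ /=.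
case: (posnP l) => [->|l_gt0]; first by rewrite ballot_0 //; ring.
by rewrite -!mulrDl altw_rec ?mul0r.
Qed.

Lemma altw_ballot n : (0 < n)%N -> \sum_(l < n.+1) altw l * ballot n l = (n == 1%N)%:R.
Proof.
case: n => [|[|n]] // _; last exact: altw_ballotS.
by rewrite !big_ord_recl big_ord0 /= !ballot1 /altw /=.
Qed.

Definition ballot_sum (c : nat -> rat) n r := \sum_(l < n.+1) c l * ballot n (l * 2 ^ r).

Lemma ballot_sum_widen (c : nat -> rat) n r N : (n < N)%N ->
  \sum_(l < N) c l * ballot n (l * 2 ^ r) = ballot_sum c n r.
Proof.
move=> lt_nN; apply: (@sum_ord_shrink _ (fun l => c l * ballot n (l * 2 ^ r))) => // l lt_nl.
by rewrite ballot_gt ?mulr0 // (leq_trans lt_nl) // leq_pmulr // expn_gt0.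
Qed.

Lemma run_weight_ballot_sum (c : nat -> rat) n r : (0 < n)%N -> c 0%N = 0 ->
  \sum_(k < n) run_weight n k.*2 * ballot_sum c k r = ballot_sum c n r.+1.
Proof.
move=> n_gt0 c0.
under eq_bigr => k _ do rewrite -(@ballot_sum_widen c k r n.+1 (leqW (ltn_ord k))) mulr_sumr.
rewrite exchange_big /=; apply: eq_bigr => l _.
under eq_bigr => k _ do rewrite mulrCA.
rewrite -mulr_sumr; case: (posnP l) => [->|l_gt0]; first by rewrite c0 !mul0r.
by rewrite run_weight_ballot ?muln_gt0 ?l_gt0 ?expn_gt0 // -muln2 -mulnA -expnSr.
Qed.

Lemma count_cdegE r n : (0 < n)%N -> count_cdeg n r = 4 ^+ r.+1 * ballot_sum altw n r.
Proof.
elim: r n => [|r IH] n n_gt0.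
  rewrite /ballot_sum; under eq_bigr => l _ do rewrite expn0 muln1.
  rewrite altw_ballot //; case: n n_gt0 => [|[|m]] // _.
  by rewrite count_cdeg0 mulr0.
case: n n_gt0 => [|[|m]] // _.
- rewrite count_cdeg1 /ballot_sum !big_ord_recl big_ord0 altw0 mul0r add0r.
  by rewrite ballot_gt ?mulr0 // mul1n -[1%N]/(2 ^ 0)%N ltn_exp2l.
rewrite count_cdegSS -run_weight_ballot_sum ?altw0 // exprS -mulrA; congr (_ * _).
rewrite mulr_sumr; apply: eq_bigr => -[[|k] lt_km] _ /=; first by rewrite run_weightS0 !mul0r mulr0.
by rewrite IH // mulrCA.
Qed.

Lemma ballot_sum_parity (c : nat -> rat) n r : ballot_sum c n r =
  \sum_(j < n.+1) (c j.*2 * ballot n (j * 2 ^ r.+1) + c j.*2.+1 * ballot n (j.*2.+1 * 2 ^ r)).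
Proof.
rewrite -(@ballot_sum_widen _ _ _ n.+1.*2); last by rewrite -addnn ltn_addr.
rewrite (@sum_ord_double _ (fun l => c l * ballot n (l * 2 ^ r))); apply: eq_bigr => j _.
by rewrite -muln2 -mulnA (mulnC 2) -expnSr.
Qed.

Lemma ballot_sum_large (c : nat -> rat) n r : c 0%N = 0 -> (n < 2 ^ r)%N ->
  ballot_sum c n r = 0.
Proof.
move=> c0 lt_n2r; apply: big1 => l _.
case: (posnP l) => [->|l_gt0]; first by rewrite c0 mul0r.
by rewrite ballot_gt ?mulr0 // (leq_trans lt_n2r) // leq_pmull.
Qed.

Notation ballot_moment := (ballot_sum (fun j => j%:R)).

Lemma altw_even j : altw j.*2 = - (j.*2)%:R.
Proof.
case: j => [|j]; first by rewrite altw0 oppr0.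
by rewrite /altw doubleS /= exprS -signr_odd odd_double expr0 mulr1 mulrN1.
Qed.

Lemma altw_odd j : altw j.*2.+1 = (j.*2.+1)%:R.
Proof. by rewrite /altw /= -signr_odd odd_double expr0 mulr1. Qed.

Lemma ballot_sum_altw n r :
  ballot_sum altw n r = ballot_moment n r - 4 * ballot_moment n r.+1.
Proof.
rewrite [ballot_sum altw _ _]ballot_sum_parity [ballot_moment n r]ballot_sum_parity.
rewrite [ballot_moment n r.+1]/ballot_sum mulr_sumr -sumrB; apply: eq_bigr => j _.
by rewrite altw_even altw_odd -muln2 natrM; ring.
Qed.

Definition v2w (k : nat) : rat := 2 ^+ logn 2 k - 1.

Lemma v2w_odd j : v2w j.*2.+1 = 0.
Proof.
rewrite /v2w; suff -> : logn 2 j.*2.+1 = 0%N by rewrite expr0 subrr.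
by apply/eqP; rewrite -leqn0 leqNgt logn_gt0 mem_primes /= dvdn2 /= odd_double.
Qed.

Lemma v2w_even j : (0 < j)%N -> v2w j.*2 = 2 * v2w j + 1.
Proof.
move=> j_gt0; rewrite /v2w -muln2 mulnC lognM // (logn_prime 2) // eqxx add1n exprS.
ring.
Qed.

Notation ballot_v2 := (ballot_sum (fun k => k%:R * v2w k)).

Lemma ballot_v2S n r : ballot_v2 n r = 4 * ballot_v2 n r.+1 + 2 * ballot_moment n r.+1.
Proof.
rewrite [ballot_v2 n r]ballot_sum_parity /ballot_sum !mulr_sumr -big_split.
apply: eq_bigr => j _ /=.
rewrite v2w_odd mulr0 mul0r addr0.
case: (posnP j) => [->|j_gt0]; first by rewrite !mul0r !mulr0; ring.
by rewrite v2w_even // -muln2 natrM; ring.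
Qed.

Lemma sum_deg_ballot_altw_telescope n R :
  \sum_(r < R) r%:R * 4 ^+ r.+1 * ballot_sum altw n r =
  \sum_(r < R) (0 < r)%N%:R * 4 ^+ r.+1 * ballot_moment n r
    - R.-1%:R * 4 ^+ R.+1 * ballot_moment n R.
Proof.
elim: R => [|R IH]; first by rewrite !big_ord0 /= !mul0r subr0.
rewrite !big_ord_recr /= IH ballot_sum_altw.
case: R {IH} => [|R] /=; first by rewrite !big_ord0; ring.
by rewrite !exprS -!natr1; ring.
Qed.

Lemma ballot_v2_unroll n R : ballot_v2 n 0 =
  \sum_(r < R) 2 * 4 ^+ r * ballot_moment n r.+1 + 4 ^+ R * ballot_v2 n R.
Proof.
elim: R => [|R IH]; first by rewrite big_ord0 expr0 mul1r add0r.
by rewrite big_ord_recr /= IH ballot_v2S exprS; ring.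
Qed.

Lemma sum_deg_ballot_altw n :
  \sum_(r < n.+1) r%:R * 4 ^+ r.+1 * ballot_sum altw n r = 8 * ballot_v2 n 0.
Proof.
have lt_n2n : (n < 2 ^ n)%N by apply: ltn_expl.
rewrite sum_deg_ballot_altw_telescope (ballot_v2_unroll n n).
rewrite (@ballot_sum_large _ n n.+1) ?(leq_trans lt_n2n) ?leq_exp2l //.
rewrite (@ballot_sum_large _ n n) ?mul0r //.
rewrite big_ord_recl /= mul0r add0r !mulr0 subr0 addr0 mulr_sumr.
by apply: eq_bigr => r _; rewrite /bump leq0n add1n /= !exprS; ring.
Qed.

Theorem corollary2 (n : nat) : (1 <= n)%N ->
  (forall r : nat,
     (#|[set p : n.-tuple step | cdeg p == r]|%:R / (4 ^+ n) : rat)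
     = (4 : rat) ^ ((r.+1)%:Z - n%:Z) *
       \sum_(0 <= l < n.+1)
          (l%:R * (-1) ^+ l.-1 *
           (binZ (2 * n).-1 (n%:Z - (l * 2 ^ r)%N%:Z)
            - binZ (2 * n).-1 (n%:Z - (l * 2 ^ r)%N%:Z - 1))))
  /\
  ((\sum_(p : n.-tuple step) (cdeg p)%:R) / (4 ^+ n) : rat)
     = (4 ^+ n)^-1 *
       \sum_(1 <= k < n.+1)
          (8 * k%:R * (2 ^+ logn 2 k - 1) *
           (binZ (2 * n).-1 (n%:Z - k%:Z) - binZ (2 * n).-1 (n%:Z - k%:Z - 1))).
Proof.
move=> n_gt0; split=> [r|].
- rewrite card_cdeg_eq count_cdegE // big_mkord exprzDr ?unitfE // -exprnN.
  by rewrite mulrAC -mulrA mulrC.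
- rewrite (@big_tuple_pathsum n (fun s => (cdeg s)%:R)) pathsum_cdeg.
  under eq_bigr => r _ do rewrite count_cdegE // mulrA.
  rewrite sum_deg_ballot_altw mulrC; congr (_ * _).
  rewrite /ballot_sum mulr_sumr big_ord_recl mul0r mulr0 add0r big_add1 /= big_mkord.
  by apply: eq_bigr => k _; rewrite /bump leq0n add1n expn0 muln1 /v2w /ballot; ring.
Qed.
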